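(* Let $f,g\in C(\mathbb{R}_0^+\times\mathbb{R}_0^+,\mathbb{R}_0^+)$ be such that $t\mapsto f(t,s)$ and $t\mapsto g(t,s)$ are nondecreasing for every fixed $s$. Let $\phi\in C(\mathbb{R}_0^+,\mathbb{R}_0^+)$ be strictly increasing with $\lim_{x\to\infty}\phi(x)=\infty$. Let $c\in C(\mathbb{R}_0^+,\mathbb{R}^+)$ be nondecreasing. Let $\eta,w\in C(\mathbb{R}_0^+,\mathbb{R}_0^+)$ be nondecreasing with $\eta(x)>0$ and $w(x)>0$ for all $x>0$. Let $x_0$, $G$, $\Psi$ be as in the context (in particular $\int_{x_0}^\infty \frac{ds}{\eta(\phi^{-1}(s))}=\infty$). Let $\alpha\in C^1(\mathbb{R}_0^+,\mathbb{R}_0^+)$ be nondecreasing with $\alpha(t)\le t$ for all $t\ge 0$. Suppose $u\in C(\mathbb{R}_0^+,\mathbb{R}_0^+)$ satisfies $$\phi(u(t))\le c(t)+\int_0^{\alpha(t)}\big[f(t,s)\,\eta(u(s))\,w(u(s))+g(t,s)\,\eta(u(s))\big]\,ds\qquad\text{for all } t\ge 0.$$ Define $p(t)=G(c(t))+\int_0^{\alpha(t)}g(t,s)\,ds$. Then there exists $\tau>0$ such that for all $t\in[0,\tau]$, $$\Psi(p(t))+\int_0^{\alpha(t)}f(t,s)\,ds\in \Psi\big((0,\infty)\big)=\mathrm{Dom}(\Psi^{-1})$$ and $$u(t)\le \phi^{-1}\Big\{G^{-1}\Big(\Psi^{-1}\Big[\Psi(p(t))+\int_0^{\alpha(t)}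f(t,s)\,ds\Big]\Big)\Big\}.$$
   Context: $\mathbb{R}_0^+=[0,\infty)$, $\mathbb{R}^+=(0,\infty)$. $\phi^{-1}$ denotes the inverse of $\phi$, defined on $[\phi(0),\infty)$. The constant $x_0$ is a real number with $\phi(0)\le x_0<c(0)$ such that $\int_{x_0}^x\frac{ds}{\eta(\phi^{-1}(s))}<\infty$ for every $x\ge x_0$ and $\int_{x_0}^\infty\frac{ds}{\eta(\phi^{-1}(s))}=\infty$ (in the paper: $x_0>0$ may be required when $\int_0^x\frac{ds}{\eta(\phi^{-1}(s))}=\infty$, and $x_0\ge0$ is allowed when this integral is finite). Define $G:[x_0,\infty)\to[0,\infty)$ by $G(x)=\int_{x_0}^x\frac{ds}{\eta(\phi^{-1}(s))}$; it is a strictly increasing bijection with inverse $G^{-1}$. Fix $x_1>0$ and define, for $x>0$, $\Psi(x)=\int_{x_1}^x\frac{ds}{w(\phi^{-1}(G^{-1}(s)))}$; $\Psi$ is strictly increasing on $(0,\infty)$, $\Psi^{-1}$ is its inverse and $\mathrm{Dom}(\Psi^{-1})=\Psi((0,\infty))$. *)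

From Stdlib Require Import Reals Lra Classical ClassicalEpsilon.
Open Scope R_scope.

(* Oriented Riemann integral of f from a to b (value 0 if not Riemann integrable). *)
Definition Rint (f : R -> R) (a b : R) : R :=
  epsilon (inhabits 0)
    (fun v => (exists pr : Riemann_integrable f a b, RiemannInt pr = v)
              \/ ((Riemann_integrable f a b -> False) /\ v = 0)).

Definition lower_improper_limit (f : R -> R) (a b l : R) : Prop :=
  forall eps, 0 < eps -> exists d, 0 < d /\
    forall c, a < c < a + d -> c <= b -> Rabs (Rint f c b - l) < eps.

(* int_a^b f, improper at a allowed; 0 if a >= b or no limit exists. *)
Definition ImpInt (f : R -> R) (a b : R) : R :=
  epsilon (inhabits 0)
    (fun l => (a < b /\ lower_improper_limit f a b l)
              \/ (~ (a < b /\ exists l', lower_improper_limit f a b l') /\ l = 0)).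

(* Inverse of f restricted to the domain P (value 0 outside the range). *)
Definition inv_on (P : R -> Prop) (f : R -> R) (y : R) : R :=
  epsilon (inhabits 0)
    (fun x => (P x /\ f x = y) \/ (~ (exists x', P x' /\ f x' = y) /\ x = 0)).

Definition cont_nonneg (h : R -> R) : Prop :=
  forall x, 0 <= x -> forall eps, 0 < eps -> exists d, 0 < d /\
    forall y, 0 <= y -> Rabs (y - x) < d -> Rabs (h y - h x) < eps.

Definition cont2_nonneg (h : R -> R -> R) : Prop :=
  forall t s, 0 <= t -> 0 <= s -> forall eps, 0 < eps -> exists d, 0 < d /\
    forall t' s', 0 <= t' -> 0 <= s' -> Rabs (t' - t) < d -> Rabs (s' - s) < d ->
      Rabs (h t' s' - h t s) < eps.

Definition nondecr_nonneg (h : R -> R) : Prop :=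
  forall x y, 0 <= x -> x <= y -> h x <= h y.

Definition strict_incr_nonneg (h : R -> R) : Prop :=
  forall x y, 0 <= x -> x < y -> h x < h y.

Definition C1_nonneg (h : R -> R) : Prop :=
  exists h' : R -> R, cont_nonneg h' /\
    forall x, 0 <= x -> forall eps, 0 < eps -> exists d, 0 < d /\
      forall y, 0 <= y -> y <> x -> Rabs (y - x) < d ->
        Rabs ((h y - h x) / (y - x) - h' x) < eps.

Definition phi_inv (phi : R -> R) : R -> R := inv_on (fun x => 0 <= x) phi.

Definition Gfun (eta phi : R -> R) (x0 x : R) : R :=
  ImpInt (fun s => / eta (phi_inv phi s)) x0 x.

Definition G_inv (eta phi : R -> R) (x0 : R) : R -> R :=
  inv_on (fun x => x0 <= x) (Gfun eta phi x0).

Definition Psi (eta w phi : R -> R) (x0 x1 x : R) : R :=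
  Rint (fun s => / w (phi_inv phi (G_inv eta phi x0 s))) x1 x.

Definition Psi_inv (eta w phi : R -> R) (x0 x1 : R) : R -> R :=
  inv_on (fun x => 0 < x) (Psi eta w phi x0 x1).

(* Fix T >= 0.  The kernels are nondecreasing in t, so freezing t = T gives
   phi(u s) <= v(alpha s) <= v(s) on [0, T] for the majorant
   v(y) = c(T) + int_0^y [f(T,.) eta(u) w(u) + g(T,.) eta(u)].  On [0, Y], Y = alpha T,
   the function D(y) = Psi(G(v y) + int_y^Y g(T,.)) - int_0^y f(T,.) is left
   continuous and has nonpositive upper right Dini derivative: here
   eta(u) <= eta(phi^-1 v), w(u) <= w(phi^-1 v) and the monotonicity of
   1 / w(phi^-1 (G^-1 .)) are used.  Hence D(Y) <= D(0), that is
   Psi(G(v Y)) <= Psi(p T) + int_0^Y f(T,.), and inverting Psi, G and phi gives the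
   bound.  For t in a short interval [0, tau] the argument of Psi^-1 lies in the
   range of Psi, by continuity at t = 0. *)

From Pilot Require Import Defs.
From Stdlib Require Import Reals Lra Classical ClassicalEpsilon Ranalysis5.
Open Scope R_scope.

Lemma Rabs_le_inv x a : Rabs x <= a -> -a <= x <= a.
Proof. unfold Rabs; destruct Rcase_abs; lra. Qed.

Lemma Rabs_lt_inv x a : Rabs x < a -> -a < x < a.
Proof. unfold Rabs; destruct Rcase_abs; lra. Qed.

Lemma Rabs_small_zero x : (forall e, 0 < e -> Rabs x < e) -> x = 0.
Proof.
  intros H. destruct (Req_dec x 0) as [E|Ne]; auto.
  specialize (H (Rabs x) (Rabs_pos_lt _ Ne)). lra.
Qed.

Lemma lipschitz_step M e : 0 <= M -> 0 < e -> 0 < e / (M + 1) /\ M * (e / (M + 1)) < e.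
Proof.
  intros HM He. assert (Hs : 0 < e / (M + 1)) by (apply Rdiv_lt_0_compat; lra).
  split; auto.
  apply Rlt_le_trans with ((M + 1) * (e / (M + 1))); [nra | right; field; lra].
Qed.

Lemma continuity_pt_intro (h : R -> R) x :
  (forall e, 0 < e -> exists d, 0 < d /\ forall y, Rabs (y - x) < d -> Rabs (h y - h x) < e) ->
  continuity_pt h x.
Proof.
  intros H e He. destruct (H e He) as [d [Hd Hy]].
  exists d; split; auto. intros y [_ Hyx]. exact (Hy y Hyx).
Qed.

Lemma continuity_pt_elim (h : R -> R) x : continuity_pt h x ->
  forall e, 0 < e -> exists d, 0 < d /\ forall y, Rabs (y - x) < d -> Rabs (h y - h x) < e.
Proof.
  intros H e He. destruct (H e He) as [d [Hd Hy]].
  exists d; split; auto. intros y Hyx.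
  destruct (Req_dec y x) as [->|Hne].
  - rewrite Rminus_diag, Rabs_R0; auto.
  - apply (Hy y). split; [split; [exact I | auto] | exact Hyx].
Qed.

Definition cont_within (P : R -> Prop) (h : R -> R) (y : R) : Prop :=
  forall e, 0 < e -> exists d, 0 < d /\
    forall y', P y' -> Rabs (y' - y) < d -> Rabs (h y' - h y) < e.

Lemma cont_within_lipschitz P h y r M : 0 < r -> 0 <= M ->
  (forall y', P y' -> Rabs (y' - y) < r -> Rabs (h y' - h y) <= M * Rabs (y' - y)) ->
  cont_within P h y.
Proof.
  intros Hr HM H e He. destruct (lipschitz_step M e HM He) as [Hs HMs].
  exists (Rmin r (e / (M + 1))). split; [apply Rmin_glb_lt; auto |].
  intros y' Py' Hd.
  assert (Hd1 : Rabs (y' - y) < r) by (eapply Rlt_le_trans; [exact Hd | apply Rmin_l]).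
  assert (Hd2 : Rabs (y' - y) < e / (M + 1)) by (eapply Rlt_le_trans; [exact Hd | apply Rmin_r]).
  eapply Rle_lt_trans; [apply H; auto |].
  eapply Rle_lt_trans; [| exact HMs]. apply Rmult_le_compat_l; lra.
Qed.

Lemma continuity_pt_lipschitz h y r M : 0 < r -> 0 <= M ->
  (forall y', Rabs (y' - y) < r -> Rabs (h y' - h y) <= M * Rabs (y' - y)) ->
  continuity_pt h y.
Proof.
  intros Hr HM H. apply continuity_pt_intro. intros e He.
  destruct (cont_within_lipschitz (fun _ => True) h y r M Hr HM ltac:(auto) e He)
    as [d [Hd Hdd]].
  exists d; auto.
Qed.

Lemma cont_within_const P a y : cont_within P (fun _ => a) y.
Proof. intros e He. exists 1; split; [lra |]. intros. rewrite Rminus_diag, Rabs_R0; auto. Qed.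

Lemma cont_within_plus P h k y :
  cont_within P h y -> cont_within P k y -> cont_within P (fun s => h s + k s) y.
Proof.
  intros Hh Hk e He.
  destruct (Hh (e / 2) ltac:(lra)) as [d1 [Hd1 H1]].
  destruct (Hk (e / 2) ltac:(lra)) as [d2 [Hd2 H2]].
  exists (Rmin d1 d2). split; [apply Rmin_glb_lt; auto |].
  intros y' Py' Hd.
  specialize (H1 y' Py' ltac:(eapply Rlt_le_trans; [exact Hd | apply Rmin_l])).
  specialize (H2 y' Py' ltac:(eapply Rlt_le_trans; [exact Hd | apply Rmin_r])).
  apply Rabs_lt_inv in H1; apply Rabs_lt_inv in H2. apply Rabs_def1; lra.
Qed.

Lemma cont_within_minus P h k y :
  cont_within P h y -> cont_within P k y -> cont_within P (fun s => h s - k s) y.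
Proof.
  intros Hh Hk. apply (cont_within_plus P h (fun s => - k s)); auto.
  intros e He. destruct (Hk e He) as [d [Hd H]]. exists d; split; auto.
  intros y' Py' Hd'. replace (- k y' - - k y) with (- (k y' - k y)) by ring.
  rewrite Rabs_Ropp; auto.
Qed.

Lemma cont_within_comp P h F y :
  cont_within P h y -> continuity_pt F (h y) -> cont_within P (fun s => F (h s)) y.
Proof.
  intros Hh HF e He. destruct (continuity_pt_elim _ _ HF e He) as [d [Hd H1]].
  destruct (Hh d Hd) as [d2 [Hd2 H2]]. exists d2; split; auto.
Qed.

Lemma cont_nonneg_clamp h x : cont_nonneg h -> continuity_pt (fun y => h (Rmax 0 y)) x.
Proof.
  intros H. apply continuity_pt_intro. intros e He.
  destruct (H (Rmax 0 x) (Rmax_l _ _) e He) as [d [Hd Hy]].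
  exists d. split; auto. intros y Hyx. apply Hy; [apply Rmax_l |].
  apply Rle_lt_trans with (Rabs (y - x)); auto.
  unfold Rmax, Rabs; destruct (Rle_dec 0 y); destruct (Rle_dec 0 x);
    repeat destruct Rcase_abs; lra.
Qed.

Lemma cont_nonneg_of_clamp h :
  (forall x, 0 <= x -> continuity_pt (fun y => h (Rmax 0 y)) x) -> cont_nonneg h.
Proof.
  intros H x Hx e He. destruct (continuity_pt_elim _ _ (H x Hx) e He) as [d [Hd Hy]].
  exists d; split; auto. intros y Hy0 Hyd. specialize (Hy y Hyd).
  rewrite !Rmax_right in Hy by lra. exact Hy.
Qed.

Lemma cont_nonneg_pos h x : cont_nonneg h -> 0 < x -> continuity_pt h x.
Proof.
  intros H Hx. apply continuity_pt_intro. intros e He.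
  destruct (H x (Rlt_le _ _ Hx) e He) as [d [Hd Hy]].
  exists (Rmin d x). split; [apply Rmin_glb_lt; auto |].
  intros y Hyx.
  assert (Rabs (y - x) < x) by (eapply Rlt_le_trans; [exact Hyx | apply Rmin_r]).
  apply Hy; [apply Rabs_lt_inv in H0; lra |].
  eapply Rlt_le_trans; [exact Hyx | apply Rmin_l].
Qed.

Lemma cont_nonneg_plus a b :
  cont_nonneg a -> cont_nonneg b -> cont_nonneg (fun s => a s + b s).
Proof.
  intros Ha Hb. apply cont_nonneg_of_clamp. intros x _.
  apply (continuity_pt_plus (fun y => a (Rmax 0 y)) (fun y => b (Rmax 0 y)));
    apply cont_nonneg_clamp; auto.
Qed.

Lemma cont_nonneg_mult a b :
  cont_nonneg a -> cont_nonneg b -> cont_nonneg (fun s => a s * b s).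
Proof.
  intros Ha Hb. apply cont_nonneg_of_clamp. intros x _.
  apply (continuity_pt_mult (fun y => a (Rmax 0 y)) (fun y => b (Rmax 0 y)));
    apply cont_nonneg_clamp; auto.
Qed.

Lemma cont_nonneg_comp a b : cont_nonneg a -> cont_nonneg b ->
  (forall x, 0 <= x -> 0 <= b x) -> cont_nonneg (fun s => a (b s)).
Proof.
  intros Ha Hb Hp x Hx e He. destruct (Ha (b x) (Hp x Hx) e He) as [d [Hd H1]].
  destruct (Hb x Hx d Hd) as [d2 [Hd2 H2]]. exists d2; split; auto.
Qed.

Lemma cont2_slice f t : cont2_nonneg f -> 0 <= t -> cont_nonneg (f t).
Proof.
  intros Hf Ht x Hx e He. destruct (Hf t x Ht Hx e He) as [d [Hd H]].
  exists d; split; auto. intros y Hy Hyd. apply H; auto. rewrite Rminus_diag, Rabs_R0; auto.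
Qed.

Lemma cont_nonneg_bounded h b : cont_nonneg h -> 0 <= b ->
  exists M, 0 <= M /\ forall x, 0 <= x <= b -> Rabs (h x) <= M.
Proof.
  intros Hh Hb.
  destruct (continuity_ab_maj (fun y => Rabs (h (Rmax 0 y))) 0 b Hb) as [Mx [H1 _]].
  { intros c _. apply (continuity_pt_comp (fun y => h (Rmax 0 y)) Rabs).
    - apply cont_nonneg_clamp; auto.
    - apply Rcontinuity_abs. }
  exists (Rabs (h (Rmax 0 Mx))). split; [apply Rabs_pos |].
  intros x Hx. specialize (H1 x Hx). simpl in H1. rewrite Rmax_right in H1 by lra. exact H1.
Qed.

Lemma Rint_eq f a b (pr : Riemann_integrable f a b) : Rint f a b = RiemannInt pr.
Proof.
  unfold Rint.
  destruct (epsilon_spec (inhabits 0)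
    (fun v => (exists pr : Riemann_integrable f a b, RiemannInt pr = v)
              \/ ((Riemann_integrable f a b -> False) /\ v = 0))) as [[pr' E] | [F _]].
  - exists (RiemannInt pr). left. exists pr. reflexivity.
  - rewrite <- E. apply RiemannInt_P5.
  - exfalso; apply F; exact pr.
Qed.

Lemma Rint_chasles f a b c : Riemann_integrable f a b -> Riemann_integrable f b c ->
  Rint f a b + Rint f b c = Rint f a c.
Proof.
  intros p1 p2. rewrite (Rint_eq _ _ _ p1), (Rint_eq _ _ _ p2),
    (Rint_eq _ _ _ (RiemannInt_P24 p1 p2)). apply RiemannInt_P26.
Qed.

Lemma Rint_empty f a : Rint f a a = 0.
Proof. rewrite (Rint_eq _ _ _ (RiemannInt_P7 f a)). apply RiemannInt_P9. Qed.

Lemma Rint_swap f a b : Riemann_integrable f a b -> Rint f b a = - Rint f a b.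
Proof.
  intros p. pose proof (Rint_chasles f a b a p (RiemannInt_P1 p)) as E.
  rewrite Rint_empty in E. lra.
Qed.

Lemma Rint_bound f a b l u : Riemann_integrable f a b -> a <= b ->
  (forall x, a <= x <= b -> l <= f x <= u) -> l * (b - a) <= Rint f a b <= u * (b - a).
Proof.
  intros p Hab H. rewrite (Rint_eq _ _ _ p). apply RiemannInt_const_bound; auto.
  intros; apply H; lra.
Qed.

Lemma Rint_le f g a b : Riemann_integrable f a b -> Riemann_integrable g a b -> a <= b ->
  (forall x, a <= x <= b -> f x <= g x) -> Rint f a b <= Rint g a b.
Proof.
  intros p1 p2 Hab H. rewrite (Rint_eq _ _ _ p1), (Rint_eq _ _ _ p2).
  apply RiemannInt_P19; auto. intros; apply H; lra.
Qed.

Lemma Rint_nonneg f a b : Riemann_integrable f a b -> a <= b ->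
  (forall x, a <= x <= b -> 0 <= f x) -> 0 <= Rint f a b.
Proof.
  intros p Hab H.
  pose proof (Rint_le (fun _ => 0) f a b (RiemannInt_P14 a b 0) p Hab H) as L.
  assert (Z : Rint (fun _ => 0) a b = 0 * (b - a))
    by exact (eq_trans (Rint_eq (fct_cte 0) a b _) (RiemannInt_P15 (RiemannInt_P14 a b 0))).
  lra.
Qed.

Lemma Rint_abs_bound f a b M : Riemann_integrable f a b ->
  (forall x, Rmin a b <= x <= Rmax a b -> Rabs (f x) <= M) ->
  Rabs (Rint f a b) <= M * Rabs (b - a).
Proof.
  intros p H. destruct (Rle_dec a b) as [Hab | Hab].
  - rewrite Rmin_left, Rmax_right in H by lra.
    pose proof (Rint_bound f a b (-M) M p Hab) as B.
    rewrite (Rabs_right (b - a)) by lra.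
    assert (-M * (b - a) <= Rint f a b <= M * (b - a)).
    { apply B. intros x Hx. apply Rabs_le_inv, H; auto. }
    apply Rabs_le. lra.
  - rewrite Rmin_right, Rmax_left in H by lra.
    pose proof (RiemannInt_P1 p) as p'.
    pose proof (Rint_bound f b a (-M) M p' ltac:(lra)) as B.
    rewrite (Rint_swap f b a p'), (Rabs_left (b - a)) by lra.
    apply Rabs_le.
    assert (-M * (a - b) <= Rint f b a <= M * (a - b)).
    { apply B. intros x Hx. apply Rabs_le_inv, H; auto. }
    lra.
Qed.

Lemma integrable_of_continuity f a b :
  (forall x, Rmin a b <= x <= Rmax a b -> continuity_pt f x) -> Riemann_integrable f a b.
Proof.
  intros H. destruct (Rle_dec a b).
  - rewrite Rmin_left, Rmax_right in H by lra. apply continuity_implies_RiemannInt; auto.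
  - rewrite Rmin_right, Rmax_left in H by lra. apply RiemannInt_P1.
    apply continuity_implies_RiemannInt; auto. lra.
Qed.

Lemma cont_nonneg_integrable h a b : cont_nonneg h -> 0 <= a -> 0 <= b ->
  Riemann_integrable h a b.
Proof.
  intros Hh Ha Hb. refine (@Riemann_integrable_ext (fun y => h (Rmax 0 y)) h a b _ _).
  - intros x Hx. assert (0 <= Rmin a b) by (apply Rmin_glb; auto).
    rewrite Rmax_right; auto; lra.
  - apply integrable_of_continuity. intros; apply cont_nonneg_clamp; auto.
Qed.

Lemma Rint_increment k y e : cont_nonneg k -> 0 <= y -> 0 < e ->
  exists d, 0 < d /\ forall h, 0 < h < d ->
    (k y - e) * h <= Rint k y (y + h) <= (k y + e) * h.
Proof.
  intros Hk Hy He. destruct (Hk y Hy e He) as [d [Hd C]].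
  exists d. split; auto. intros h Hh.
  assert (B : (k y - e) * (y + h - y) <= Rint k y (y + h) <= (k y + e) * (y + h - y)).
  { apply Rint_bound; [apply cont_nonneg_integrable; auto; lra | lra |].
    intros x Hx. assert (Rabs (k x - k y) < e) by (apply C; [lra | apply Rabs_def1; lra]).
    apply Rabs_lt_inv in H. lra. }
  replace (y + h - y) with h in B by ring. exact B.
Qed.

Lemma Rint_upper_cont_within h Y y : cont_nonneg h -> 0 <= y <= Y ->
  cont_within (fun s => 0 <= s <= Y) (fun s => Rint h 0 s) y.
Proof.
  intros Hh Hy. destruct (cont_nonneg_bounded h Y Hh ltac:(lra)) as [M [HM HB]].
  apply (cont_within_lipschitz _ _ _ 1 M); [lra | auto |]. intros y' Hy' _; cbv beta in Hy'.
  rewrite <- (Rint_chasles h 0 y y') by (apply cont_nonneg_integrable; auto; lra).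
  replace (Rint h 0 y + Rint h y y' - Rint h 0 y) with (Rint h y y') by ring.
  apply Rint_abs_bound; [apply cont_nonneg_integrable; auto; lra |].
  intros x Hx. apply HB.
  assert (0 <= Rmin y y') by (apply Rmin_glb; lra).
  assert (Rmax y y' <= Y) by (apply Rmax_lub; lra). lra.
Qed.

Lemma inv_on_spec (P : R -> Prop) F y : (exists x, P x /\ F x = y) ->
  P (inv_on P F y) /\ F (inv_on P F y) = y.
Proof.
  intros Ex. unfold inv_on.
  destruct (epsilon_spec (inhabits 0)
    (fun x => (P x /\ F x = y) \/ (~ (exists x', P x' /\ F x' = y) /\ x = 0))) as [H | [H _]].
  - destruct Ex as [x Hx]. exists x. left; auto.
  - exact H.
  - contradiction.
Qed.

Lemma inv_on_eq (P : R -> Prop) F x :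
  (forall a b, P a -> P b -> F a = F b -> a = b) -> P x -> inv_on P F (F x) = x.
Proof.
  intros Inj Px. destruct (inv_on_spec P F (F x)) as [H1 H2]; [exists x; auto |].
  apply Inj; auto.
Qed.

Lemma ivt_le F a b y : a <= b -> (forall x, a <= x <= b -> continuity_pt F x) ->
  F a <= y <= F b -> exists x, a <= x <= b /\ F x = y.
Proof.
  intros Hab Hc Hy.
  destruct (Req_dec (F a) y) as [E | Na]; [exists a; split; [lra | auto] |].
  destruct (Req_dec (F b) y) as [E | Nb]; [exists b; split; [lra | auto] |].
  assert (a < b) by (destruct (Req_dec a b); [subst; lra | lra]).
  destruct (IVT_interv (fun x => F x - y) a b) as [z [Hz Ez]]; auto; try lra.
  - intros x Hx. apply continuity_pt_minus; auto. apply continuity_pt_const. intros u v; reflexivity.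
  - exists z. split; auto. lra.
Qed.

Lemma inv_on_continuity F lo x :
  (forall a b, lo <= a -> a < b -> F a < F b) ->
  (forall x, lo < x -> continuity_pt F x) -> lo < x ->
  continuity_pt (inv_on (fun x => lo <= x) F) (F x).
Proof.
  intros Inc Cf Hx.
  assert (Inj : forall a b, lo <= a -> lo <= b -> F a = F b -> a = b).
  { intros a b Ha Hb E. destruct (Rtotal_order a b) as [L | [L | L]]; auto.
    - pose proof (Inc a b Ha L); lra.
    - pose proof (Inc b a Hb L); lra. }
  apply continuity_pt_intro. intros eps Heps.
  set (e := Rmin eps ((x - lo) / 2)).
  assert (He : 0 < e) by (apply Rmin_glb_lt; lra).
  assert (He1 : e <= eps) by apply Rmin_l.
  assert (He2 : e <= (x - lo) / 2) by apply Rmin_r.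
  pose proof (Inc (x - e) x ltac:(lra) ltac:(lra)) as L1.
  pose proof (Inc x (x + e) ltac:(lra) ltac:(lra)) as L2.
  exists (Rmin (F x - F (x - e)) (F (x + e) - F x)). split; [apply Rmin_glb_lt; lra |].
  intros y Hy.
  assert (Hy1 : Rabs (y - F x) < F x - F (x - e))
    by (eapply Rlt_le_trans; [exact Hy | apply Rmin_l]).
  assert (Hy2 : Rabs (y - F x) < F (x + e) - F x)
    by (eapply Rlt_le_trans; [exact Hy | apply Rmin_r]).
  apply Rabs_lt_inv in Hy1. apply Rabs_lt_inv in Hy2.
  destruct (ivt_le F (x - e) (x + e) y ltac:(lra)) as [x' [Hx' Ex']];
    [intros z Hz; apply Cf; lra | lra |].
  rewrite (inv_on_eq (fun x => lo <= x) F x Inj ltac:(simpl; lra)), <- Ex',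
    (inv_on_eq (fun x => lo <= x) F x' Inj ltac:(simpl; lra)).
  assert (x' <> x - e) by (intro; subst; lra).
  assert (x' <> x + e) by (intro; subst; lra).
  apply Rabs_def1; lra.
Qed.

(* We first show the
   slack version D b <= D a + eps (b - a) by a supremum argument. *)
Lemma dini_comparison_slack (D : R -> R) a b eps : a <= b -> 0 < eps ->
  (forall y, a < y <= b -> forall e, 0 < e -> exists d, 0 < d /\
      forall y', a <= y' <= y -> y - y' < d -> Rabs (D y' - D y) < e) ->
  (forall y, a <= y < b -> forall e, 0 < e -> exists d, 0 < d /\
      forall h, 0 < h < d -> y + h <= b -> D (y + h) - D y <= e * h) ->
  D b <= D a + eps * (b - a).
Proof.
  intros Hab Heps Hl Hr.
  set (S := fun y => a <= y <= b /\ forall s, a <= s <= y -> D s <= D a + eps * (s - a)).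
  assert (Sa : S a) by (split; [lra | intros s Hs; replace s with a by lra; lra]).
  destruct (completeness S) as [sg [Hub Hlub]];
    [exists b; intros y [Hy _]; lra | exists a; exact Sa |].
  assert (Hsg1 : a <= sg) by (apply Hub; exact Sa).
  assert (Hsg2 : sg <= b) by (apply Hlub; intros y [Hy _]; lra).
  (* the bound holds strictly below the supremum ... *)
  assert (Below : forall s, a <= s < sg -> D s <= D a + eps * (s - a)).
  { intros s Hs. destruct (classic (exists y, S y /\ s < y)) as [[y [[_ Hy] Hsy]] | N].
    - apply Hy. lra.
    - exfalso. assert (sg <= s) by (apply Hlub; intros y Sy;
        destruct (Rle_dec y s); auto; exfalso; apply N; exists y; split; auto; lra).
      lra. }
  (* ... at the supremum, by left continuity ... *)
  assert (At : D sg <= D a + eps * (sg - a)).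
  { destruct (Req_dec sg a) as [E | Ne]; [rewrite E; lra |].
    destruct (Rle_dec (D sg) (D a + eps * (sg - a))) as [ok | nok]; auto. exfalso.
    set (g := D sg - (D a + eps * (sg - a))).
    destruct (Hl sg ltac:(lra) g ltac:(unfold g; lra)) as [d [Hd Hdd]].
    set (s := sg - Rmin d (sg - a) / 2).
    assert (0 < Rmin d (sg - a)) by (apply Rmin_glb_lt; lra).
    assert (Rmin d (sg - a) <= d) by apply Rmin_l.
    assert (Rmin d (sg - a) <= sg - a) by apply Rmin_r.
    specialize (Hdd s ltac:(unfold s; lra) ltac:(unfold s; lra)).
    specialize (Below s ltac:(unfold s; lra)). apply Rabs_lt_inv in Hdd.
    assert (eps * (s - a) <= eps * (sg - a)) by (apply Rmult_le_compat_l; unfold s; lra).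
    unfold g in Hdd. lra. }
  (* ... and the supremum is b, by the Dini derivative bound. *)
  assert (Top : sg = b).
  { destruct (Req_dec sg b) as [E | Ne]; auto. exfalso.
    destruct (Hr sg ltac:(lra) eps Heps) as [d [Hd Hdd]].
    set (y' := sg + Rmin d (b - sg) / 2).
    assert (0 < Rmin d (b - sg)) by (apply Rmin_glb_lt; lra).
    assert (Rmin d (b - sg) <= d) by apply Rmin_l.
    assert (Rmin d (b - sg) <= b - sg) by apply Rmin_r.
    assert (Sy' : S y').
    { split; [unfold y'; lra |]. intros s Hs.
      destruct (Rtotal_order s sg) as [Lt | [Eq | Gt]]; [apply Below; lra | subst s; exact At |].
      unfold y' in Hs. specialize (Hdd (s - sg) ltac:(lra) ltac:(lra)).
      replace (sg + (s - sg)) with s in Hdd by ring. nra. }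
    specialize (Hub y' Sy'). unfold y' in Hub. lra. }
  subst sg. exact At.
Qed.

Lemma dini_comparison (D : R -> R) a b : a <= b ->
  (forall y, a < y <= b -> forall e, 0 < e -> exists d, 0 < d /\
      forall y', a <= y' <= y -> y - y' < d -> Rabs (D y' - D y) < e) ->
  (forall y, a <= y < b -> forall e, 0 < e -> exists d, 0 < d /\
      forall h, 0 < h < d -> y + h <= b -> D (y + h) - D y <= e * h) ->
  D b <= D a.
Proof.
  intros Hab Hl Hr. destruct (Rle_dec (D b) (D a)) as [ok | nok]; auto. exfalso.
  set (eps := (D b - D a) / (2 * (b - a + 1))).
  assert (Heps : 0 < eps) by (unfold eps; apply Rdiv_lt_0_compat; lra).
  pose proof (dini_comparison_slack D a b eps Hab Heps Hl Hr).
  assert (eps * (b - a) < D b - D a); [| lra].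
  apply Rlt_le_trans with (eps * (2 * (b - a + 1))).
  - apply Rmult_lt_compat_l; lra.
  - right. unfold eps. field. lra.
Qed.

(* Both G (with k = 1 / eta(phi^-1)) and Psi (with k = 1 / w(phi^-1(G^-1))) are of
   this form: they are strictly increasing, continuous, and their increments are
   controlled by k at the endpoints. *)
Section MonotonePrimitive.

Variables (lo : R) (k F : R -> R).
Hypothesis k_pos : forall s, lo < s -> 0 < k s.
Hypothesis k_anti : forall s1 s2, lo < s1 -> s1 <= s2 -> k s2 <= k s1.
Hypothesis k_cont : forall s, lo < s -> continuity_pt k s.
Hypothesis F_diff : forall a b, lo < a -> lo < b -> F b - F a = Rint k a b.

Lemma prim_integrable a b : lo < a -> lo < b -> Riemann_integrable k a b.
Proof.
  intros Ha Hb. apply integrable_of_continuity. intros x Hx. apply k_cont.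
  assert (lo < Rmin a b) by (apply Rmin_glb_lt; auto). lra.
Qed.

Lemma prim_increment_bounds a b : lo < a -> a <= b ->
  k b * (b - a) <= F b - F a <= k a * (b - a).
Proof.
  intros Ha Hab. rewrite F_diff by lra.
  apply Rint_bound; [apply prim_integrable; lra | auto |].
  intros x Hx. split; apply k_anti; lra.
Qed.

Lemma prim_strict_incr a b : lo < a -> a < b -> F a < F b.
Proof.
  intros Ha Hab. pose proof (prim_increment_bounds a b Ha ltac:(lra)).
  pose proof (k_pos b ltac:(lra)). nra.
Qed.

Lemma prim_increment_upper a b r : lo < a -> lo < b -> 0 <= r -> b - a <= r ->
  F b - F a <= k a * r.
Proof.
  intros Ha Hb Hr Hba. pose proof (k_pos a Ha).
  destruct (Rle_dec a b) as [Hab | Hab].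
  - pose proof (prim_increment_bounds a b Ha Hab). nra.
  - pose proof (prim_increment_bounds b a Hb ltac:(lra)). pose proof (k_pos b Hb). nra.
Qed.

Lemma prim_cont x : lo < x -> continuity_pt F x.
Proof.
  intros Hx. set (m := (x + lo) / 2).
  apply (continuity_pt_lipschitz _ _ ((x - lo) / 2) (k m)); [lra | left; apply k_pos; unfold m; lra |].
  intros y Hy. apply Rabs_lt_inv in Hy.
  rewrite F_diff by (unfold m in *; lra).
  apply Rint_abs_bound; [apply prim_integrable; lra |].
  intros z Hz. assert (m < Rmin x y) by (apply Rmin_glb_lt; unfold m; lra).
  rewrite Rabs_right by (left; apply k_pos; unfold m in *; lra).
  apply k_anti; unfold m in *; lra.
Qed.

End MonotonePrimitive.

Section LocalBihari.

Variable phi : R -> R.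
Hypothesis Hphi_cont : cont_nonneg phi.
Hypothesis Hphi_incr : strict_incr_nonneg phi.
Hypothesis Hphi_lim : forall M, exists X, 0 <= X /\ forall x, X <= x -> M < phi x.

Lemma phi_inv_spec y : phi 0 <= y -> 0 <= phi_inv phi y /\ phi (phi_inv phi y) = y.
Proof.
  intros Hy. apply inv_on_spec. destruct (Hphi_lim y) as [X [HX HXX]].
  destruct (ivt_le (fun x => phi (Rmax 0 x)) 0 X y HX) as [x [Hx Ex]].
  - intros; apply cont_nonneg_clamp; auto.
  - rewrite !Rmax_right by lra. specialize (HXX X (Rle_refl _)). lra.
  - exists x. rewrite Rmax_right in Ex by lra. split; [lra | auto].
Qed.

Lemma phi_inv_ge a y : 0 <= a -> phi a <= y -> phi 0 <= y -> a <= phi_inv phi y.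
Proof.
  intros Ha H1 H2. destruct (phi_inv_spec y H2) as [P1 P2].
  destruct (Rle_dec a (phi_inv phi y)) as [ok | nok]; auto.
  pose proof (Hphi_incr (phi_inv phi y) a P1 ltac:(lra)). lra.
Qed.

Lemma phi_inv_mono y1 y2 : phi 0 <= y1 -> y1 <= y2 -> phi_inv phi y1 <= phi_inv phi y2.
Proof.
  intros H1 H2. destruct (phi_inv_spec y1 H1) as [P1 P2]. apply phi_inv_ge; lra.
Qed.

Lemma phi_inv_pos y : phi 0 < y -> 0 < phi_inv phi y.
Proof.
  intros H. destruct (phi_inv_spec y ltac:(lra)) as [[P1 | P1] P2]; auto.
  rewrite <- P1 in P2. lra.
Qed.

Lemma phi_inv_cont y : phi 0 < y -> continuity_pt (phi_inv phi) y.
Proof.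
  intros H. pose proof (phi_inv_pos y H).
  destruct (phi_inv_spec y ltac:(lra)) as [P1 P2].
  rewrite <- P2. apply inv_on_continuity; auto.
  intros; apply cont_nonneg_pos; auto.
Qed.

Variables (eta : R -> R) (x0 : R).
Hypothesis Heta_cont : cont_nonneg eta.
Hypothesis Heta_mon : nondecr_nonneg eta.
Hypothesis Heta_pos : forall x, 0 < x -> 0 < eta x.
Hypothesis Hx0_phi : phi 0 <= x0.
Hypothesis HG_fin : forall x, x0 < x ->
  exists l, lower_improper_limit (fun s => / eta (phi_inv phi s)) x0 x l.
Hypothesis HG_div : forall M, exists X, x0 <= X /\ forall x, X <= x -> M < Gfun eta phi x0 x.

Local Notation iota := (fun s => / eta (phi_inv phi s)).
Local Notation G := (Gfun eta phi x0).
Local Notation Ginv := (G_inv eta phi x0).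

Lemma iota_pos s : x0 < s -> 0 < iota s.
Proof. intros Hs. apply Rinv_0_lt_compat, Heta_pos, phi_inv_pos. lra. Qed.

Lemma iota_anti s1 s2 : x0 < s1 -> s1 <= s2 -> iota s2 <= iota s1.
Proof.
  intros H1 H2. apply Rinv_le_contravar; [apply Heta_pos, phi_inv_pos; lra |].
  apply Heta_mon; [apply phi_inv_spec; lra | apply phi_inv_mono; lra].
Qed.

Lemma iota_cont s : x0 < s -> continuity_pt iota s.
Proof.
  intros Hs. pose proof (phi_inv_pos s ltac:(lra)).
  apply (continuity_pt_inv (fun s => eta (phi_inv phi s))).
  - apply (continuity_pt_comp (phi_inv phi) eta); [apply phi_inv_cont; lra |].
    apply cont_nonneg_pos; auto.
  - apply Rgt_not_eq, Heta_pos; auto.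
Qed.

Lemma G_limit b : x0 < b -> lower_improper_limit iota x0 b (G b).
Proof.
  intros Hb. unfold Gfun, ImpInt.
  match goal with |- context [epsilon ?i ?P] =>
    destruct (epsilon_spec i P) as [[_ H] | [N _]] end.
  - destruct (HG_fin b Hb) as [l Hl]. exists l. left; auto.
  - exact H.
  - exfalso. apply N. split; auto.
Qed.

Lemma G_at_x0 : G x0 = 0.
Proof.
  unfold Gfun, ImpInt.
  match goal with |- context [epsilon ?i ?P] =>
    destruct (epsilon_spec i P) as [[H _] | [_ H]] end.
  - exists 0. right. split; auto. intros [H _]; lra.
  - lra.
  - exact H.
Qed.

Lemma G_diff a b : x0 < a -> x0 < b -> G b - G a = Rint iota a b.
Proof.
  intros Ha Hb.
  assert (Int : forall a b, x0 < a -> x0 < b -> Riemann_integrable iota a b)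
    by exact (prim_integrable x0 iota iota_cont).
  pose proof (G_limit a Ha) as La. pose proof (G_limit b Hb) as Lb.
  assert (G b - G a - Rint iota a b = 0); [| lra].
  apply Rabs_small_zero. intros e He.
  destruct (La (e / 2) ltac:(lra)) as [d1 [Hd1 H1]].
  destruct (Lb (e / 2) ltac:(lra)) as [d2 [Hd2 H2]].
  set (c := x0 + Rmin (Rmin d1 d2) (Rmin (a - x0) (b - x0)) / 2).
  assert (0 < Rmin (Rmin d1 d2) (Rmin (a - x0) (b - x0))) by (repeat apply Rmin_glb_lt; lra).
  pose proof (Rmin_l (Rmin d1 d2) (Rmin (a - x0) (b - x0))).
  pose proof (Rmin_r (Rmin d1 d2) (Rmin (a - x0) (b - x0))).
  pose proof (Rmin_l d1 d2). pose proof (Rmin_r d1 d2).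
  pose proof (Rmin_l (a - x0) (b - x0)). pose proof (Rmin_r (a - x0) (b - x0)).
  specialize (H1 c ltac:(unfold c; lra) ltac:(unfold c; lra)).
  specialize (H2 c ltac:(unfold c; lra) ltac:(unfold c; lra)).
  rewrite <- (Rint_chasles _ c a b) in H2 by (apply Int; unfold c; lra).
  apply Rabs_lt_inv in H1; apply Rabs_lt_inv in H2. apply Rabs_def1; lra.
Qed.

Lemma G_increment_bounds a b : x0 < a -> a <= b ->
  iota b * (b - a) <= G b - G a <= iota a * (b - a).
Proof. exact (prim_increment_bounds x0 iota G iota_anti iota_cont G_diff a b). Qed.

Lemma G_increment_upper a b r : x0 < a -> x0 < b -> 0 <= r -> b - a <= r ->
  G b - G a <= iota a * r.
Proof. exact (prim_increment_upper x0 iota G iota_pos iota_anti iota_cont G_diff a b r). Qed.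

Lemma G_cont x : x0 < x -> continuity_pt G x.
Proof. exact (prim_cont x0 iota G iota_pos iota_anti iota_cont G_diff x). Qed.

(* G is a limit of integrals of the positive function iota, hence G >= 0 ... *)
Lemma G_nonneg m : x0 < m -> 0 <= G m.
Proof.
  intros Hm. destruct (Rle_dec 0 (G m)) as [ok | nok]; auto. exfalso.
  destruct (G_limit m Hm (- G m)) as [d [Hd Hl]]; [lra |].
  set (c := x0 + Rmin d (m - x0) / 2).
  assert (0 < Rmin d (m - x0)) by (apply Rmin_glb_lt; lra).
  pose proof (Rmin_l d (m - x0)). pose proof (Rmin_r d (m - x0)).
  specialize (Hl c ltac:(unfold c; lra) ltac:(unfold c; lra)).
  assert (0 <= Rint iota c m).
  { apply Rint_nonneg; [apply (prim_integrable x0 iota iota_cont); unfold c; lra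
                        | unfold c; lra |].
    intros y Hy. left. apply iota_pos. unfold c in *; lra. }
  apply Rabs_lt_inv in Hl. lra.
Qed.

Lemma G_strict_incr a b : x0 <= a -> a < b -> G a < G b.
Proof.
  intros Ha Hab. destruct Ha as [Ha | <-].
  - pose proof (G_increment_bounds a b Ha ltac:(lra)). pose proof (iota_pos b ltac:(lra)). nra.
  - rewrite G_at_x0. set (m := (x0 + b) / 2).
    pose proof (G_nonneg m ltac:(unfold m; lra)).
    pose proof (G_increment_bounds m b ltac:(unfold m; lra) ltac:(unfold m; lra)).
    pose proof (iota_pos b ltac:(lra)). assert (0 < b - m) by (unfold m; lra). nra.
Qed.

Lemma G_pos x : x0 < x -> 0 < G x.
Proof. intros Hx. rewrite <- G_at_x0. apply G_strict_incr; lra. Qed.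

(* G maps (x0, oo) onto (0, oo): small values come from the limit at x0, large
   ones from the divergence hypothesis, the rest from the intermediate value theorem. *)
Lemma G_surj q : 0 < q -> exists x, x0 < x /\ G x = q.
Proof.
  intros Hq. set (b := x0 + 1).
  destruct (G_limit b ltac:(unfold b; lra) q Hq) as [d [Hd Hdd]].
  set (c := x0 + Rmin d 1 / 2).
  assert (0 < Rmin d 1) by (apply Rmin_glb_lt; lra).
  pose proof (Rmin_l d 1). pose proof (Rmin_r d 1).
  specialize (Hdd c ltac:(unfold c; lra) ltac:(unfold c, b; lra)).
  rewrite <- (G_diff c b) in Hdd by (unfold c, b; lra).
  apply Rabs_lt_inv in Hdd.
  pose proof (G_pos c ltac:(unfold c; lra)).
  destruct (HG_div q) as [X [HX HXX]].
  specialize (HXX (Rmax X c) (Rmax_l _ _)).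
  destruct (ivt_le G c (Rmax X c) q (Rmax_r _ _)) as [x [Hx Ex]];
    [intros; apply G_cont; unfold c in *; lra | lra |].
  exists x. split; auto. unfold c in *; lra.
Qed.

Lemma G_inv_spec q : 0 < q -> x0 < Ginv q /\ G (Ginv q) = q.
Proof.
  intros Hq. destruct (inv_on_spec (fun x => x0 <= x) G q) as [H1 H2].
  { destruct (G_surj q Hq) as [x [Hx Ex]]. exists x; split; auto; lra. }
  split; auto. destruct H1 as [H1 | H1]; auto. rewrite <- H1, G_at_x0 in H2. lra.
Qed.

Lemma G_inv_G x : x0 <= x -> Ginv (G x) = x.
Proof.
  intros Hx. apply inv_on_eq; auto.
  intros a b Ha Hb E. destruct (Rtotal_order a b) as [L | [L | L]]; auto.
  - pose proof (G_strict_incr a b Ha L); lra.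
  - pose proof (G_strict_incr b a Hb L); lra.
Qed.

Lemma G_inv_ge x q : x0 <= x -> 0 < q -> G x <= q -> x <= Ginv q.
Proof.
  intros Hx Hq Hle. destruct (G_inv_spec q Hq) as [A1 A2].
  destruct (Rle_dec x (Ginv q)) as [ok | nok]; auto.
  pose proof (G_strict_incr (Ginv q) x ltac:(lra) ltac:(lra)). lra.
Qed.

Lemma G_inv_mono q1 q2 : 0 < q1 -> q1 <= q2 -> Ginv q1 <= Ginv q2.
Proof.
  intros H1 H2. destruct (G_inv_spec q1 H1) as [A1 A2].
  apply G_inv_ge; lra.
Qed.

Lemma G_inv_cont q : 0 < q -> continuity_pt Ginv q.
Proof.
  intros Hq. destruct (G_inv_spec q Hq) as [A1 A2].
  rewrite <- A2. apply inv_on_continuity; auto.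
  - intros; apply G_strict_incr; auto.
  - intros; apply G_cont; auto.
Qed.

Variables (w : R -> R) (x1 : R).
Hypothesis Hw_cont : cont_nonneg w.
Hypothesis Hw_mon : nondecr_nonneg w.
Hypothesis Hw_pos : forall x, 0 < x -> 0 < w x.
Hypothesis Hx1 : 0 < x1.

Local Notation kappa := (fun s => / w (phi_inv phi (G_inv eta phi x0 s))).
Local Notation Psi := (Psi eta w phi x0 x1).

Lemma phi_inv_G_inv_pos s : 0 < s -> 0 < phi_inv phi (Ginv s).
Proof. intros Hs. destruct (G_inv_spec s Hs). apply phi_inv_pos. lra. Qed.

Lemma kappa_pos s : 0 < s -> 0 < kappa s.
Proof. intros Hs. apply Rinv_0_lt_compat, Hw_pos, phi_inv_G_inv_pos; auto. Qed.

Lemma kappa_anti s1 s2 : 0 < s1 -> s1 <= s2 -> kappa s2 <= kappa s1.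
Proof.
  intros H1 H2. apply Rinv_le_contravar; [apply Hw_pos, phi_inv_G_inv_pos; auto |].
  pose proof (phi_inv_G_inv_pos s1 H1). destruct (G_inv_spec s1 H1).
  apply Hw_mon; [lra |]. apply phi_inv_mono; [lra | apply G_inv_mono; auto].
Qed.

Lemma kappa_cont s : 0 < s -> continuity_pt kappa s.
Proof.
  intros Hs. pose proof (phi_inv_G_inv_pos s Hs). destruct (G_inv_spec s Hs).
  apply (continuity_pt_inv (fun s => w (phi_inv phi (Ginv s)))).
  - apply (continuity_pt_comp Ginv (fun a => w (phi_inv phi a))); [apply G_inv_cont; auto |].
    apply (continuity_pt_comp (phi_inv phi) w); [apply phi_inv_cont; lra |].
    apply cont_nonneg_pos; auto.
  - apply Rgt_not_eq, Hw_pos; auto.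
Qed.

Lemma kappa_G x : x0 <= x -> kappa (G x) = / w (phi_inv phi x).
Proof. intros Hx. cbv beta. rewrite G_inv_G; auto. Qed.

Lemma Psi_diff a b : 0 < a -> 0 < b -> Psi b - Psi a = Rint kappa a b.
Proof.
  intros Ha Hb. unfold Defs.Psi.
  rewrite <- (Rint_chasles _ x1 a b) by (apply (prim_integrable 0 kappa kappa_cont); auto).
  ring.
Qed.

Lemma Psi_increment_upper a b r : 0 < a -> 0 < b -> 0 <= r -> b - a <= r ->
  Psi b - Psi a <= kappa a * r.
Proof. exact (prim_increment_upper 0 kappa Psi kappa_pos kappa_anti kappa_cont Psi_diff a b r). Qed.

Lemma Psi_strict_incr a b : 0 < a -> a < b -> Psi a < Psi b.
Proof. exact (prim_strict_incr 0 kappa Psi kappa_pos kappa_anti kappa_cont Psi_diff a b). Qed.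

Lemma Psi_cont x : 0 < x -> continuity_pt Psi x.
Proof. exact (prim_cont 0 kappa Psi kappa_pos kappa_anti kappa_cont Psi_diff x). Qed.

Lemma Psi_inv_ge X a : (exists x, 0 < x /\ Psi x = X) -> 0 < a -> Psi a <= X ->
  a <= Psi_inv eta w phi x0 x1 X.
Proof.
  intros Ex Ha Hle. destruct (inv_on_spec (fun x => 0 < x) Psi X Ex) as [A1 A2].
  fold (Psi_inv eta w phi x0 x1 X) in A1, A2. cbv beta in A1.
  destruct (Rle_dec a (Psi_inv eta w phi x0 x1 X)) as [ok | nok]; auto.
  pose proof (Psi_strict_incr _ a A1 ltac:(lra)). lra.
Qed.

Variables (f g : R -> R -> R) (c alpha u : R -> R).
Hypothesis Hf_cont : cont2_nonneg f.
Hypothesis Hf_nn : forall t s, 0 <= t -> 0 <= s -> 0 <= f t s.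
Hypothesis Hg_cont : cont2_nonneg g.
Hypothesis Hg_nn : forall t s, 0 <= t -> 0 <= s -> 0 <= g t s.
Hypothesis Hf_mon : forall s, 0 <= s -> nondecr_nonneg (fun t => f t s).
Hypothesis Hg_mon : forall s, 0 <= s -> nondecr_nonneg (fun t => g t s).
Hypothesis Hc_cont : cont_nonneg c.
Hypothesis Hc_mon : nondecr_nonneg c.
Hypothesis Hx0_c : x0 < c 0.
Hypothesis Heta_nn : forall x, 0 <= x -> 0 <= eta x.
Hypothesis Hw_nn : forall x, 0 <= x -> 0 <= w x.
Hypothesis Halpha_nn : forall t, 0 <= t -> 0 <= alpha t.
Hypothesis Halpha_le : forall t, 0 <= t -> alpha t <= t.
Hypothesis Hu_cont : cont_nonneg u.
Hypothesis Hu_nn : forall t, 0 <= t -> 0 <= u t.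
Hypothesis Hu : forall t, 0 <= t ->
  phi (u t) <= c t + Rint (fun s => f t s * eta (u s) * w (u s) + g t s * eta (u s))
                          0 (alpha t).

Section FixedTime.

(* Freezing the time variable at T in the kernels (they are nondecreasing in t)
   gives the majorant v(y) = c(T) + int_0^y H of phi(u) on [0, T]. *)
Variable T : R.
Hypothesis HT : 0 <= T.

Definition maj_integrand (s : R) : R := f T s * eta (u s) * w (u s) + g T s * eta (u s).
Definition majorant (y : R) : R := c T + Rint maj_integrand 0 y.

Lemma maj_integrand_cont : cont_nonneg maj_integrand.
Proof.
  unfold maj_integrand.
  apply cont_nonneg_plus; repeat apply cont_nonneg_mult;
    try apply cont2_slice; auto; apply cont_nonneg_comp; auto.
Qed.

Lemma maj_integrand_nn s : 0 <= s -> 0 <= maj_integrand s.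
Proof.
  intros Hs. unfold maj_integrand.
  pose proof (Hf_nn T s HT Hs). pose proof (Hg_nn T s HT Hs).
  pose proof (Heta_nn (u s) (Hu_nn s Hs)). pose proof (Hw_nn (u s) (Hu_nn s Hs)).
  apply Rplus_le_le_0_compat; repeat apply Rmult_le_pos; auto.
Qed.

Lemma majorant_increment y y' : 0 <= y -> 0 <= y' ->
  majorant y' - majorant y = Rint maj_integrand y y'.
Proof.
  intros Hy Hy'. unfold majorant.
  rewrite <- (Rint_chasles maj_integrand 0 y y')
    by (apply cont_nonneg_integrable; auto using maj_integrand_cont; lra).
  ring.
Qed.

Lemma majorant_mono a b : 0 <= a <= b -> majorant a <= majorant b.
Proof.
  intros Hab. pose proof (majorant_increment a b ltac:(lra) ltac:(lra)).
  assert (0 <= Rint maj_integrand a b); [| lra].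
  apply Rint_nonneg; [apply cont_nonneg_integrable; auto using maj_integrand_cont; lra | lra |].
  intros; apply maj_integrand_nn; lra.
Qed.

Lemma majorant_at_0 : majorant 0 = c T.
Proof. unfold majorant. rewrite Rint_empty. ring. Qed.

Lemma majorant_gt_x0 y : 0 <= y -> x0 < majorant y.
Proof.
  intros Hy. pose proof (majorant_mono 0 y ltac:(lra)). rewrite majorant_at_0 in H.
  pose proof (Hc_mon 0 T (Rle_refl 0) HT). lra.
Qed.

Lemma u_below_majorant_alpha s : 0 <= s <= T -> phi (u s) <= majorant (alpha s).
Proof.
  intros Hs. pose proof (Hu s ltac:(lra)). pose proof (Halpha_nn s ltac:(lra)).
  assert (c s <= c T) by (apply Hc_mon; lra).
  assert (Rint (fun r => f s r * eta (u r) * w (u r) + g s r * eta (u r)) 0 (alpha s)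
          <= Rint maj_integrand 0 (alpha s)); [| unfold majorant; lra].
  apply Rint_le; auto.
  - apply cont_nonneg_integrable; try lra.
    apply cont_nonneg_plus; repeat apply cont_nonneg_mult;
      try apply cont2_slice; auto; try lra; apply cont_nonneg_comp; auto.
  - apply cont_nonneg_integrable; auto using maj_integrand_cont; lra.
  - intros r Hr. unfold maj_integrand.
    pose proof (Heta_nn (u r) (Hu_nn r ltac:(lra))). pose proof (Hw_nn (u r) (Hu_nn r ltac:(lra))).
    assert (f s r <= f T r) by (apply (Hf_mon r); lra).
    assert (g s r <= g T r) by (apply (Hg_mon r); lra).
    assert (0 <= eta (u r) * w (u r)) by (apply Rmult_le_pos; auto).
    rewrite !Rmult_assoc. apply Rplus_le_compat; apply Rmult_le_compat_r; auto.
Qed.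

Lemma u_below_majorant s : 0 <= s <= T -> phi (u s) <= majorant s.
Proof.
  intros Hs. pose proof (u_below_majorant_alpha s Hs).
  pose proof (Halpha_nn s ltac:(lra)). pose proof (Halpha_le s ltac:(lra)).
  pose proof (majorant_mono (alpha s) s ltac:(lra)). lra.
Qed.

(* Since u <= phi^-1(v) on [0, T], the integrand H is controlled by the majorant:
   H y <= eta(phi^-1 (v y)) (f(T,y) w(phi^-1 (v y)) + g(T,y)). *)
Lemma maj_integrand_le y : 0 <= y <= T ->
  maj_integrand y <= eta (phi_inv phi (majorant y)) *
    (f T y * w (phi_inv phi (majorant y)) + g T y).
Proof.
  intros Hy. pose proof (majorant_gt_x0 y ltac:(lra)).
  assert (Huy : u y <= phi_inv phi (majorant y))
    by (apply phi_inv_ge; [apply Hu_nn; lra | apply u_below_majorant; lra | lra]).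
  unfold maj_integrand. pose proof (Hu_nn y ltac:(lra)).
  pose proof (Hf_nn T y HT ltac:(lra)). pose proof (Hg_nn T y HT ltac:(lra)).
  pose proof (Heta_nn (u y) ltac:(lra)). pose proof (Hw_nn (u y) ltac:(lra)).
  assert (eta (u y) <= eta (phi_inv phi (majorant y))) by (apply Heta_mon; auto).
  assert (w (u y) <= w (phi_inv phi (majorant y))) by (apply Hw_mon; auto).
  assert (eta (u y) * w (u y) <= eta (phi_inv phi (majorant y)) * w (phi_inv phi (majorant y)))
    by (apply Rmult_le_compat; auto).
  nra.
Qed.

Section Comparison.

(* On [0, Y] with Y <= T we compare Psi(G(v)) with the integral of f(T, .): the
   auxiliary m(y) = G(v y) + int_y^Y g(T, .) absorbs the g-term, and
   D(y) = Psi(m y) - int_0^y f(T, .) is shown to be nonincreasing. *)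
Variable Y : R.
Hypothesis HY : 0 <= Y <= T.

Definition aux_m (y : R) : R := G (majorant y) + (Rint (g T) 0 Y - Rint (g T) 0 y).
Definition aux_D (y : R) : R := Psi (aux_m y) - Rint (f T) 0 y.

Lemma aux_m_ge y : 0 <= y <= Y -> G (majorant y) <= aux_m y.
Proof.
  intros Hy. unfold aux_m.
  rewrite <- (Rint_chasles (g T) 0 y Y)
    by (apply cont_nonneg_integrable; try apply cont2_slice; auto; lra).
  assert (0 <= Rint (g T) y Y); [| lra].
  apply Rint_nonneg; [apply cont_nonneg_integrable; try apply cont2_slice; auto; lra | lra |].
  intros; apply Hg_nn; lra.
Qed.

Lemma aux_m_pos y : 0 <= y <= Y -> 0 < aux_m y.
Proof.
  intros Hy. pose proof (aux_m_ge y Hy).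
  pose proof (G_pos (majorant y) (majorant_gt_x0 y ltac:(lra))). lra.
Qed.

Lemma aux_D_left_cont y : 0 <= y <= Y -> cont_within (fun s => 0 <= s <= Y) aux_D y.
Proof.
  intros Hy. unfold aux_D.
  apply (cont_within_minus _ (fun s => Psi (aux_m s)) (fun s => Rint (f T) 0 s));
    [| apply Rint_upper_cont_within; try apply cont2_slice; auto].
  apply (cont_within_comp _ aux_m); [| apply Psi_cont, aux_m_pos; auto].
  unfold aux_m.
  apply (cont_within_plus _ (fun s => G (majorant s))).
  - apply (cont_within_comp _ majorant); [| apply G_cont, majorant_gt_x0; lra].
    apply cont_within_plus; [apply cont_within_const |].
    apply Rint_upper_cont_within; auto using maj_integrand_cont.
  - apply cont_within_minus; [apply cont_within_const |].
    apply Rint_upper_cont_within; try apply cont2_slice; auto.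
Qed.

Lemma aux_m_right_increment y e : 0 <= y < Y -> 0 < e ->
  exists d, 0 < d /\ forall h, 0 < h < d ->
    aux_m (y + h) - aux_m y <= w (phi_inv phi (majorant y)) * (f T y + e) * h.
Proof.
  intros Hy He.
  set (V := majorant y). assert (HV : x0 < V) by (apply majorant_gt_x0; lra).
  assert (Hp : 0 < phi_inv phi V) by (apply phi_inv_pos; lra).
  set (E := eta (phi_inv phi V)). set (W := w (phi_inv phi V)).
  assert (HE : 0 < E) by (apply Heta_pos; auto).
  assert (HW : 0 < W) by (apply Hw_pos; auto).
  pose proof (maj_integrand_le y ltac:(lra)) as HHy. fold V E W in HHy.
  destruct (Rint_increment maj_integrand y (e * E * W / 2) maj_integrand_cont
              ltac:(lra) ltac:(apply Rdiv_lt_0_compat; [repeat apply Rmult_lt_0_compat |]; lra))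
    as [d1 [Hd1 I1]].
  destruct (Rint_increment (g T) y (e * W / 2) ltac:(apply cont2_slice; auto)
              ltac:(lra) ltac:(apply Rdiv_lt_0_compat; [apply Rmult_lt_0_compat |]; lra))
    as [d2 [Hd2 I2]].
  exists (Rmin d1 d2). split; [apply Rmin_glb_lt; auto |]. intros h Hh.
  pose proof (Rmin_l d1 d2). pose proof (Rmin_r d1 d2).
  specialize (I1 h ltac:(lra)). specialize (I2 h ltac:(lra)).
  set (r := (maj_integrand y + e * E * W / 2) * h).
  assert (Hr : 0 <= r) by (unfold r; pose proof (maj_integrand_nn y ltac:(lra)); nra).
  (* growth of G(v): at most iota(v y) = 1 / E times the growth of v *)
  assert (DG : G (majorant (y + h)) - G V <= / E * r).
  { apply G_increment_upper; auto; [apply majorant_gt_x0; lra |].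
    unfold V. rewrite majorant_increment by lra. unfold r; lra. }
  assert (DGr : / E * r <= (f T y * W + g T y + e * W / 2) * h).
  { apply Rle_trans with (/ E * ((E * (f T y * W + g T y) + e * E * W / 2) * h)).
    - apply Rmult_le_compat_l; [left; apply Rinv_0_lt_compat; auto |]. unfold r; nra.
    - right. field. lra. }
  assert (Dg : Rint (g T) 0 (y + h) - Rint (g T) 0 y = Rint (g T) y (y + h)).
  { rewrite <- (Rint_chasles (g T) 0 y (y + h))
      by (apply cont_nonneg_integrable; try apply cont2_slice; auto; lra). ring. }
  unfold aux_m. fold V. fold W. nra.
Qed.

(* The upper right Dini derivative of D is <= 0, since kappa(m y) <= kappa(G(v y)) = 1 / W. *)
Lemma aux_D_right_dini y e : 0 <= y < Y -> 0 < e ->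
  exists d, 0 < d /\ forall h, 0 < h < d -> y + h <= Y -> aux_D (y + h) - aux_D y <= e * h.
Proof.
  intros Hy He.
  set (V := majorant y). assert (HV : x0 < V) by (apply majorant_gt_x0; lra).
  set (W := w (phi_inv phi V)).
  assert (HW : 0 < W) by (apply Hw_pos, phi_inv_pos; lra).
  destruct (aux_m_right_increment y (e / 2) Hy ltac:(lra)) as [d1 [Hd1 Im]].
  destruct (Rint_increment (f T) y (e / 2) ltac:(apply cont2_slice; auto) ltac:(lra) ltac:(lra))
    as [d2 [Hd2 If]].
  exists (Rmin d1 d2). split; [apply Rmin_glb_lt; auto |]. intros h Hh HhY.
  pose proof (Rmin_l d1 d2). pose proof (Rmin_r d1 d2).
  specialize (Im h ltac:(lra)). specialize (If h ltac:(lra)). fold V W in Im.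
  pose proof (Hf_nn T y HT ltac:(lra)).
  assert (Kle : / w (phi_inv phi (Ginv (aux_m y))) <= / W).
  { unfold W. rewrite <- (kappa_G V) by lra.
    apply kappa_anti; [apply G_pos; auto | apply aux_m_ge; lra]. }
  assert (DPsi : Psi (aux_m (y + h)) - Psi (aux_m y)
                 <= / w (phi_inv phi (Ginv (aux_m y))) * (W * (f T y + e / 2) * h)).
  { apply Psi_increment_upper; [apply aux_m_pos; lra | apply aux_m_pos; lra | | exact Im].
    apply Rmult_le_pos; [| lra]. apply Rmult_le_pos; lra. }
  assert (Hk : / w (phi_inv phi (Ginv (aux_m y))) * (W * (f T y + e / 2) * h)
               <= (f T y + e / 2) * h).
  { apply Rle_trans with (/ W * (W * (f T y + e / 2) * h)); [| right; field; lra].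
    apply Rmult_le_compat_r; [apply Rmult_le_pos; [apply Rmult_le_pos |]; lra | exact Kle]. }
  assert (Df : Rint (f T) 0 (y + h) - Rint (f T) 0 y = Rint (f T) y (y + h)).
  { rewrite <- (Rint_chasles (f T) 0 y (y + h))
      by (apply cont_nonneg_integrable; try apply cont2_slice; auto; lra). ring. }
  unfold aux_D. lra.
Qed.

Lemma aux_D_nonincreasing : aux_D Y <= aux_D 0.
Proof.
  apply dini_comparison; [lra | | intros y Hy e He; exact (aux_D_right_dini y e Hy He)].
  intros y Hy e He. destruct (aux_D_left_cont y ltac:(lra) e He) as [d [Hd C]].
  exists d. split; auto. intros y' Hy' Hyd. apply C; [lra | apply Rabs_def1; lra].
Qed.

End Comparison.

Lemma bound_at_time :
  (exists x, 0 < x /\ Psi x = Psi (G (c T) + Rint (g T) 0 (alpha T)) + Rint (f T) 0 (alpha T)) ->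
  u T <= phi_inv phi (Ginv (Psi_inv eta w phi x0 x1
           (Psi (G (c T) + Rint (g T) 0 (alpha T)) + Rint (f T) 0 (alpha T)))).
Proof.
  intros Hrange. set (Y := alpha T).
  assert (HY : 0 <= Y <= T) by (split; [apply Halpha_nn | apply Halpha_le]; auto).
  set (X := Psi (G (c T) + Rint (g T) 0 Y) + Rint (f T) 0 Y).
  (* D(Y) <= D(0) reads Psi(G(v Y)) <= X *)
  assert (HPsi : Psi (G (majorant Y)) <= X).
  { pose proof (aux_D_nonincreasing Y HY) as Dle. unfold aux_D, aux_m in Dle.
    rewrite majorant_at_0, !Rint_empty in Dle.
    replace (G (majorant Y) + (Rint (g T) 0 Y - Rint (g T) 0 Y)) with (G (majorant Y))
      in Dle by ring.
    replace (G (c T) + (Rint (g T) 0 Y - 0)) with (G (c T) + Rint (g T) 0 Y) in Dle by ring.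
    unfold X. lra. }
  pose proof (G_pos (majorant Y) (majorant_gt_x0 Y ltac:(lra))).
  assert (Hq : G (majorant Y) <= Psi_inv eta w phi x0 x1 X) by (apply Psi_inv_ge; auto).
  assert (Hv : majorant Y <= Ginv (Psi_inv eta w phi x0 x1 X)).
  { apply G_inv_ge; [left; apply majorant_gt_x0 | |]; lra. }
  destruct (G_inv_spec (Psi_inv eta w phi x0 x1 X)) as [Hgt _]; [lra |].
  apply phi_inv_ge; [apply Hu_nn; auto | | lra].
  pose proof (u_below_majorant_alpha T ltac:(lra)). fold Y in H0. lra.
Qed.

End FixedTime.

(* For small t the kernel integrals int_0^(alpha t) k(t, .) are small, since
   alpha t <= t and k(t, s) <= k(1, s) is bounded on [0, 1]. *)
Lemma kernel_integral_small (k : R -> R -> R) e :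
  cont2_nonneg k -> (forall t s, 0 <= t -> 0 <= s -> 0 <= k t s) ->
  (forall s, 0 <= s -> nondecr_nonneg (fun t => k t s)) -> 0 < e ->
  exists d, 0 < d /\ forall t, 0 <= t <= d -> 0 <= Rint (k t) 0 (alpha t) <= e.
Proof.
  intros Hk_cont Hk_nn Hk_mon He.
  destruct (cont_nonneg_bounded (k 1) 1 (cont2_slice k 1 Hk_cont ltac:(lra)) ltac:(lra))
    as [M [HM HB]].
  destruct (lipschitz_step M e HM He) as [Hstep HMs].
  exists (Rmin 1 (e / (M + 1))). split; [apply Rmin_glb_lt; lra |].
  intros t Ht. pose proof (Rmin_l 1 (e / (M + 1))). pose proof (Rmin_r 1 (e / (M + 1))).
  pose proof (Halpha_nn t ltac:(lra)). pose proof (Halpha_le t ltac:(lra)).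
  assert (B : 0 * (alpha t - 0) <= Rint (k t) 0 (alpha t) <= M * (alpha t - 0)).
  { apply Rint_bound; [apply cont_nonneg_integrable; try apply cont2_slice; auto; lra | lra |].
    intros s Hs. split; [apply Hk_nn; lra |].
    apply Rle_trans with (k 1 s); [apply (Hk_mon s); lra |].
    apply Rabs_le_inv, HB. lra. }
  assert (M * alpha t <= M * (e / (M + 1))) by (apply Rmult_le_compat_l; lra).
  lra.
Qed.

(* The domain condition of Psi^-1 holds on a short interval [0, tau]: there
   p(t) stays within [G(c 0), G(c 0) + 1/2] and int_0^(alpha t) f(t, .) stays below
   Psi(G(c 0) + 1) - Psi(G(c 0) + 1/2), so the value is attained by Psi on
   [p t, G(c 0) + 1]. *)
Lemma small_time_range : exists tau, 0 < tau /\ forall t, 0 <= t <= tau ->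
  exists x, 0 < x /\
    Psi x = Psi (G (c t) + Rint (g t) 0 (alpha t)) + Rint (f t) 0 (alpha t).
Proof.
  set (P0 := G (c 0)). assert (HP0 : 0 < P0) by (apply G_pos; lra).
  set (Q := Psi (P0 + 1) - Psi (P0 + 1 / 2)).
  assert (HQ : 0 < Q) by (pose proof (Psi_strict_incr (P0 + 1 / 2) (P0 + 1)); unfold Q; lra).
  destruct (kernel_integral_small g (1 / 4) Hg_cont Hg_nn Hg_mon ltac:(lra)) as [dg [Hdg Ig]].
  destruct (kernel_integral_small f Q Hf_cont Hf_nn Hf_mon HQ) as [df [Hdf If]].
  destruct (continuity_pt_elim _ _ (G_cont (c 0) Hx0_c) (1 / 4) ltac:(lra)) as [dG [HdG CG]].
  destruct (Hc_cont 0 (Rle_refl 0) dG HdG) as [dc [Hdc Cc]].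
  set (tau := Rmin (Rmin dg df) (dc / 2)).
  exists tau. split; [unfold tau; repeat apply Rmin_glb_lt; lra |]. intros t Ht.
  pose proof (Rmin_l (Rmin dg df) (dc / 2)). pose proof (Rmin_r (Rmin dg df) (dc / 2)).
  pose proof (Rmin_l dg df). pose proof (Rmin_r dg df). fold tau in H, H0.
  specialize (Ig t ltac:(lra)). specialize (If t ltac:(lra)).
  assert (Gct : P0 <= G (c t) <= P0 + 1 / 4).
  { assert (ct : c 0 <= c t) by (apply Hc_mon; lra). split.
    - destruct ct as [ct | ct]; [left; apply G_strict_incr; lra | unfold P0; rewrite ct; lra].
    - assert (Rabs (c t - c 0) < dG)
        by (apply Cc; [lra | rewrite Rminus_0_r, Rabs_right; lra]).
      specialize (CG (c t) H3). apply Rabs_lt_inv in CG. unfold P0; lra. }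
  set (pt := G (c t) + Rint (g t) 0 (alpha t)).
  assert (Hpt : P0 <= pt <= P0 + 1 / 2) by (unfold pt; lra).
  assert (Ps : Psi pt <= Psi (P0 + 1 / 2)).
  { destruct (Req_dec pt (P0 + 1 / 2)) as [E | N]; [rewrite E; lra |].
    left; apply Psi_strict_incr; lra. }
  destruct (ivt_le Psi pt (P0 + 1) (Psi pt + Rint (f t) 0 (alpha t))) as [x [Hx Ex]];
    [lra | intros; apply Psi_cont; lra | unfold Q in If; lra |].
  exists x. split; auto. lra.
Qed.

Lemma local_bihari_bound :
  let p := fun t => G (c t) + Rint (g t) 0 (alpha t) in
  exists tau, 0 < tau /\
    forall t, 0 <= t <= tau ->
      (exists x, 0 < x /\ Psi x = Psi (p t) + Rint (f t) 0 (alpha t)) /\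
      u t <= phi_inv phi (Ginv (Psi_inv eta w phi x0 x1 (Psi (p t) + Rint (f t) 0 (alpha t)))).
Proof.
  intros p. destruct small_time_range as [tau [Htau Hrange]].
  exists tau. split; auto. intros t Ht. split; [apply Hrange; auto |].
  apply bound_at_time; [lra | apply Hrange; auto].
Qed.

End LocalBihari.

Theorem theorem1
  (f g : R -> R -> R) (phi c eta w alpha u : R -> R) (x0 x1 : R)
  (Hf_cont : cont2_nonneg f) (Hf_nn : forall t s, 0 <= t -> 0 <= s -> 0 <= f t s)
  (Hg_cont : cont2_nonneg g) (Hg_nn : forall t s, 0 <= t -> 0 <= s -> 0 <= g t s)
  (Hf_mon : forall s, 0 <= s -> nondecr_nonneg (fun t => f t s))
  (Hg_mon : forall s, 0 <= s -> nondecr_nonneg (fun t => g t s))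
  (Hphi_cont : cont_nonneg phi) (Hphi_nn : forall x, 0 <= x -> 0 <= phi x)
  (Hphi_incr : strict_incr_nonneg phi)
  (Hphi_lim : forall M, exists X, 0 <= X /\ forall x, X <= x -> M < phi x)
  (Hc_cont : cont_nonneg c) (Hc_pos : forall x, 0 <= x -> 0 < c x)
  (Hc_mon : nondecr_nonneg c)
  (Heta_cont : cont_nonneg eta) (Heta_nn : forall x, 0 <= x -> 0 <= eta x)
  (Heta_mon : nondecr_nonneg eta) (Heta_pos : forall x, 0 < x -> 0 < eta x)
  (Hw_cont : cont_nonneg w) (Hw_nn : forall x, 0 <= x -> 0 <= w x)
  (Hw_mon : nondecr_nonneg w) (Hw_pos : forall x, 0 < x -> 0 < w x)
  (Hx0 : phi 0 <= x0 < c 0)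
  (HG_fin : forall x, x0 < x ->
     exists l, lower_improper_limit (fun s => / eta (phi_inv phi s)) x0 x l)
  (HG_div : forall M, exists X, x0 <= X /\ forall x, X <= x -> M < Gfun eta phi x0 x)
  (Hx1 : 0 < x1)
  (Halpha_C1 : C1_nonneg alpha) (Halpha_nn : forall t, 0 <= t -> 0 <= alpha t)
  (Halpha_mon : nondecr_nonneg alpha) (Halpha_le : forall t, 0 <= t -> alpha t <= t)
  (Hu_cont : cont_nonneg u) (Hu_nn : forall t, 0 <= t -> 0 <= u t)
  (Hu : forall t, 0 <= t ->
     phi (u t) <= c t + Rint (fun s => f t s * eta (u s) * w (u s) + g t s * eta (u s))
                              0 (alpha t)) :
  let p := fun t => Gfun eta phi x0 (c t) + Rint (g t) 0 (alpha t) in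
  exists tau, 0 < tau /\
    forall t, 0 <= t <= tau ->
      (exists x, 0 < x /\
         Psi eta w phi x0 x1 x = Psi eta w phi x0 x1 (p t) + Rint (f t) 0 (alpha t)) /\
      u t <= phi_inv phi (G_inv eta phi x0
               (Psi_inv eta w phi x0 x1
                  (Psi eta w phi x0 x1 (p t) + Rint (f t) 0 (alpha t)))).
Proof.
  assert (Hx0_phi : phi 0 <= x0) by lra.
  assert (Hx0_c : x0 < c 0) by lra.
  eapply local_bihari_bound; eassumption.
Qed.
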